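(* Let $n\ge1$ and let $d,m\ge0$ be integers with $m\ne(n-1)(d+1)$. Then $$\bigg(\sum_{j=1}^n\frac{\alpha_j^{m}}{\prod_{k\ne j}(\alpha_j-\alpha_k)^{d+1}}\bigg)\bigg|_{\alpha=0}=0.$$
   Context: $\alpha_1,\dots,\alpha_n$ are variables; $|_{\alpha=0}$ means setting all $\alpha_k=0$ in the rational function. *)

From HB Require Import structures.
From mathcomp Require Import all_boot all_order all_algebra.
From mathcomp Require Import mpoly.
Set Implicit Arguments. Unset Strict Implicit. Unset Printing Implicit Defensive.
Import Order.TTheory GRing.Theory.
Local Open Scope ring_scope.

Notation ratfun K n := {fraction {mpoly K[n]}}.
Notation "x %:F" := (@FracField.tofrac _ x) : ring_scope.

Definition alpha (K : fieldType) (n : nat) (j : 'I_n) : ratfun K n :=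
  ('X_j : {mpoly K[n]})%:F.

Definition Ssum (K : fieldType) (n d m : nat) : ratfun K n :=
  \sum_(j < n) (alpha K j ^+ m /
     \prod_(k < n | k != j) (alpha K j - alpha K k) ^+ d.+1).

(* "F|_{alpha=0} = v": F can be written as P/Q with P, Q polynomials and
   Q(0) <> 0, and v = P(0)/Q(0) (this value is independent of the choice
   of P, Q).  Setting alpha = 0 is only meaningful for such F. *)
Definition eval_at0_is (K : fieldType) (n : nat) (F : ratfun K n) (v : K) :=
  exists P Q : {mpoly K[n]},
    [/\ Q.@[fun _ => 0] != 0, F = P%:F / Q%:F & v = P.@[fun _ => 0] / Q.@[fun _ => 0]].

(** Let [A], [B] be homogeneous of degrees [a <> b].  If [A / B = P / Q] with
    [Q(0) <> 0], substitute [t * alpha] for [alpha]: in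
    [P(t alpha) B t^b = A t^a Q(t alpha)] cancel the smaller power of [t] and
    set [t = 0]; this gives [P(0) B = 0] if [a > b], and [A Q(0) = 0] (hence
    [P = 0]) if [a < b].  Either way [P(0) = 0].  The sum has common denominator
    [prod_j prod_(k <> j) (alpha_j - alpha_k)^(d+1)], of degree [n (n-1) (d+1)],
    and a numerator of degree [m + (n-1)^2 (d+1)]. *)

From HB Require Import structures.
From mathcomp Require Import all_boot all_order all_algebra.
From mathcomp Require Import mpoly.
Set Implicit Arguments. Unset Strict Implicit. Unset Printing Implicit Defensive.
Import GRing.Theory.
Local Open Scope ring_scope.

Section HomogDilation.
Variables (n : nat) (R : comNzRingType).
Implicit Types (p : {mpoly R[n]}).

Lemma dhomog_prod_const (I : finType) (P : pred I) (F : I -> {mpoly R[n]}) k :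
  (forall i, P i -> F i \is k.-homog) ->
  \prod_(i | P i) F i \is (#|P| * k).-homog.
Proof.
move=> homF; rewrite mulnC -iter_addn_0 -big_const.
apply: (big_ind2 (fun p l => p \is l.-homog)) => //.
- exact: dhomog1.
- by move=> p l q l'; apply: dhomogM.
Qed.

Lemma mpolyXB_neq0 (j k : 'I_n) : k != j -> ('X_j - 'X_k : {mpoly R[n]}) != 0.
Proof.
move=> neq_kj; apply/eqP => /(congr1 (mcoeff U_(j))).
rewrite mcoeffB !mcoeffXU eqxx (negbTE neq_kj) mcoeff0 subr0 => /eqP.
by rewrite oner_eq0.
Qed.

Lemma dhomogXU (i : 'I_n) : ('X_i : {mpoly R[n]}) \is 1.-homog.
Proof. by rewrite dhomogX; apply/eqP/mdeg1. Qed.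

Definition mdilate : {rmorphism {mpoly R[n]} -> {poly {mpoly R[n]}}} :=
  mmap (polyC \o @mpolyC n R) (fun i => ('X_i)%:P * 'X).

Lemma mdilateX m : mdilate 'X_[m] = ('X_[m])%:P * 'X^(mdeg m).
Proof.
rewrite /= mmapX /mmap1 mpolyXE_id rmorph_prod mdegE -prodrXr -big_split /=.
by apply: eq_bigr => i _; rewrite exprMn rmorphXn.
Qed.

Lemma mdilate_homog k p : p \is k.-homog -> mdilate p = p%:P * 'X^k.
Proof.
move=> /dhomogP homp; rewrite {1 2}(mpolyE p) !raddf_sum /= mulr_suml.
rewrite !big_seq; apply: eq_bigr => m /homp degm.
by rewrite -mul_mpolyC rmorphM /= mmapC mdilateX degm polyCM mulrA.
Qed.

Lemma horner0_mdilate p : (mdilate p).[0] = (p.@[fun _ => 0])%:MP.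
Proof.
rewrite /= /mmap mevalE horner_sum rmorph_sum; apply: eq_bigr => m _.
rewrite hornerM /= hornerC rmorphM /=; congr (_ * _).
rewrite /mmap1 horner_prod rmorph_prod; apply: eq_bigr => i _.
by rewrite horner_exp hornerMX mulr0 rmorphXn /= mpolyC0.
Qed.

End HomogDilation.

Arguments mpolyXB_neq0 {n R j k}.
Arguments dhomogXU {n R}.
Arguments mdilate {n R}.

Lemma horner0_eq0_mulXn (R : idomainType) (U V : {poly R}) i j :
  (i < j)%N -> U * 'X^i = V * 'X^j -> U.[0] = 0.
Proof.
move=> ltij; have Xi_neq0 : ('X^i : {poly R}) != 0 by rewrite expf_neq0 ?polyX_eq0.
rewrite -(subnK (ltnW ltij)) exprD mulrA => /(mulIf Xi_neq0) ->.
by rewrite hornerM hornerXn expr0n subn_eq0 leqNgt ltij mulr0.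
Qed.

Lemma homog_cross_horner0 (R : idomainType) n (A B P Q : {mpoly R[n]}) dA dB :
  A \is dA.-homog -> B \is dB.-homog -> B != 0 -> dA != dB ->
  Q.@[fun _ => 0] != 0 -> P * B = A * Q -> P.@[fun _ => 0] = 0.
Proof.
move=> homA homB B_neq0 neq_deg Q0_neq0 PB_AQ.
have dilated : mdilate P * B%:P * 'X^dB = A%:P * mdilate Q * 'X^dA.
  by rewrite -mulrA -(mdilate_homog homB) -rmorphM PB_AQ rmorphM
    (mdilate_homog homA) mulrAC.
case: ltngtP neq_deg => // [lt_ab | lt_ba] _.
- have := horner0_eq0_mulXn lt_ab (esym dilated).
  rewrite hornerM hornerC horner0_mdilate => /eqP.
  rewrite mulf_eq0 mpolyC_eq0 (negbTE Q0_neq0) orbF => /eqP A0.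
  move: PB_AQ; rewrite A0 mul0r => /eqP.
  by rewrite mulf_eq0 (negbTE B_neq0) orbF => /eqP ->; rewrite meval0.
- have := horner0_eq0_mulXn lt_ba dilated.
  rewrite hornerM hornerC horner0_mdilate => /eqP.
  by rewrite mulf_eq0 (negbTE B_neq0) orbF mpolyC_eq0 => /eqP.
Qed.

Lemma eval_at0_homog_ratio (K : fieldType) n (A B : {mpoly K[n]}) dA dB v :
  A \is dA.-homog -> B \is dB.-homog -> B != 0 -> dA != dB ->
  eval_at0_is (A%:F / B%:F) v -> v = 0.
Proof.
move=> homA homB B_neq0 neq_deg [P [Q [Q0_neq0 AB_PQ ->]]].
have Q_neq0 : Q != 0 by apply: contraNneq Q0_neq0 => ->; rewrite meval0.
suff -> : P.@[fun _ => 0] = 0 by rewrite mul0r.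
apply: (homog_cross_horner0 homA homB B_neq0 neq_deg Q0_neq0).
apply/eqP; rewrite -tofrac_eq !tofracM -eqr_div ?tofrac_eq0 //.
by rewrite AB_PQ.
Qed.

Section DifferenceProducts.
Variables (K : fieldType) (n d : nat).

Local Notation deg_den := ((n - 1) * d.+1)%N.

Definition den (j : 'I_n) : {mpoly K[n]} :=
  \prod_(k | k != j) ('X_j - 'X_k) ^+ d.+1.

Definition common_den : {mpoly K[n]} := \prod_(j < n) den j.

Definition num (m : nat) : {mpoly K[n]} :=
  \sum_(j < n) 'X_j ^+ m * \prod_(i | i != j) den i.

Lemma den_neq0 j : den j != 0.
Proof. by apply/prodf_neq0 => k neq_kj; rewrite expf_neq0 ?mpolyXB_neq0. Qed.

Lemma common_den_neq0 : common_den != 0.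
Proof. by apply/prodf_neq0 => j _; apply: den_neq0. Qed.

Lemma dhomog_den j : den j \is deg_den.-homog.
Proof.
have homXB k : ('X_j - 'X_k : {mpoly K[n]}) ^+ d.+1 \is (1 * d.+1)%N.-homog.
  by rewrite dhomogMn // rpredB ?dhomogXU.
have := dhomog_prod_const (P := predC1 j) (fun k _ => homXB k).
by rewrite cardC1 card_ord mul1n subn1.
Qed.

Lemma dhomog_common_den : common_den \is (n * deg_den).-homog.
Proof.
have := dhomog_prod_const (P := xpredT) (fun j _ => dhomog_den j).
by rewrite card_ord.
Qed.

Lemma dhomog_num m : num m \is (m + (n - 1) * deg_den).-homog.
Proof.
apply: rpred_sum => j _; apply: dhomogM.
  by have := dhomogMn m (@dhomogXU _ K j); rewrite mul1n.
have := dhomog_prod_const (P := predC1 j) (fun i _ => dhomog_den i).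
by rewrite cardC1 card_ord subn1.
Qed.

Lemma Ssum_eq m : Ssum K n d m = (num m)%:F / common_den%:F.
Proof.
rewrite /Ssum /num rmorph_sum /= mulr_suml; apply: eq_bigr => j _.
have den_frac : \prod_(k | k != j) (alpha K j - alpha K k) ^+ d.+1 = (den j)%:F.
  by rewrite rmorph_prod; apply: eq_bigr => k _; rewrite rmorphXn rmorphB.
rewrite /alpha -rmorphXn den_frac /common_den [\prod_(i < n) den i](bigD1 j) //=.
rewrite !tofracM invfM mulrACA divff ?mulr1 // tofrac_eq0.
by apply/prodf_neq0 => i _; apply: den_neq0.
Qed.

End DifferenceProducts.

Theorem lemma3p2 (K : fieldType) (hK : [pchar K] =i pred0) (n d m : nat) :
  (1 <= n)%N -> m <> ((n - 1) * (d + 1))%N ->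
  forall v : K, eval_at0_is (Ssum K n d m) v -> v = 0.
Proof.
move=> n_gt0 m_neq v; rewrite Ssum_eq.
apply: eval_at0_homog_ratio (dhomog_num K n d m) (dhomog_common_den K n d)
  (common_den_neq0 K n d) _.
have -> : (n * ((n - 1) * d.+1) = (n - 1) * d.+1 + (n - 1) * ((n - 1) * d.+1))%N.
  by rewrite -mulSn subn1 prednK.
by rewrite eqn_add2r; apply/eqP; rewrite addn1 in m_neq.
Qed.
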